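(* Let $(\mathcal{S},\mathcal{T})$ be an $r$-maximal cross-intersecting pair in $\binom{[n]}{\leq r}$. Then $(\phi^{-1}(\mathcal{S}),\phi^{-1}(\mathcal{T}))$ is a stable cross-intersecting pair of families in $\mathcal{I}_{n,k}^{r}$.
   Context: $\Gamma_{n,k}$ is the disjoint union of $n$ copies of $K_k$, with vertices $(i,j)$, $i\in[n]$, $j\in[k]$; $\mathcal{I}_{n,k}^r$ is the set of its independent sets of size $r$. $\binom{[n]}{\le r}$ is the set of subsets of $[n]$ of size at most $r$. $\phi(X)=\{i:(i,1)\in X\}$ for $X\in\mathcal{I}_{n,k}^r$, and $\phi^{-1}(\mathcal{X})=\{A\in\mathcal{I}_{n,k}^r:\phi(A)\in\mathcal{X}\}$. A pair of non-empty families is cross-intersecting if each member of the first meets each member of the second. A cross-intersecting pair $(\mathcal{S},\mathcal{T})$ in $\binom{[n]}{\le r}$ is $r$-maximal if whenever $(\mathcal{V},\mathcal{W})$ is a cross-intersecting pair in $\binom{[n]}{\le r}$ with $\mathcal{S}\subseteq\mathcal{V}$, $\mathcal{T}\subseteq\mathcal{W}$, then $(\mathcal{V},\mathcal{W})=(\mathcal{S},\mathcal{T})$. For $i\in[n],s\in[2,k]$: $P_{i,s}(X)=(X\setminus\{(i,s)\})\cup\{(i,1)\}$ if $(i,s)\in X$, else $X$; $\pi_{i,s}(\mathcal{F})=\{P_{i,s}(X):X\in\mathcal{F}\}\cup\{X\in\mathcal{F}:P_{i,s}(X)\in\mathcal{F}\}$; a family is stable if $\pi_{i,s}(\mathcal{F})=\mathcal{F}$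 for all $i\in[n],s\in[2,k]$, and a pair is stable if both families are. *)

(* Vertices of Gamma_{n,k}: pairs (i,j) : 'I_n * 'I_k,
   0-indexed, so the paper's (i,1) is (i, 0) here and s in [2,k] is 0 < s. *)
From mathcomp Require Import all_boot.
Set Implicit Arguments. Unset Strict Implicit. Unset Printing Implicit Defensive.

Section Defs.
Variables n k : nat.

Definition vertex := ('I_n * 'I_k)%type.

(* adjacency in Gamma_{n,k}: same copy of K_k, distinct vertices *)
Definition gamma_adj (u v : vertex) : bool := (u.1 == v.1) && (u.2 != v.2).

Definition independent (X : {set vertex}) : bool :=
  [forall u in X, forall v in X, ~~ gamma_adj u v].

Definition indep_sets (r : nat) : {set {set vertex}} :=
  [set X : {set vertex} | independent X && (#|X| == r)].

Definition low_sets (r : nat) : {set {set 'I_n}} :=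
  [set A : {set 'I_n} | #|A| <= r].

Definition phi (X : {set vertex}) : {set 'I_n} :=
  [set i | [exists j : 'I_k, (val j == 0) && ((i, j) \in X)]].

Definition phi_inv (r : nat) (F : {set {set 'I_n}}) : {set {set vertex}} :=
  [set A in indep_sets r | phi A \in F].

Definition cross_intersecting (T : finType) (A B : {set {set T}}) : Prop :=
  [/\ A != set0, B != set0 &
      forall a b, a \in A -> b \in B -> a :&: b != set0].

Definition r_maximal (r : nat) (S T : {set {set 'I_n}}) : Prop :=
  [/\ S \subset low_sets r, T \subset low_sets r, cross_intersecting S T &
      forall V W : {set {set 'I_n}}, V \subset low_sets r -> W \subset low_sets r ->
        cross_intersecting V W -> S \subset V -> T \subset W ->
        V = S /\ W = T].

(* the element "1" of [k], built from any s : 'I_k *)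
Definition first_of (s : 'I_k) : 'I_k :=
  Ordinal (leq_ltn_trans (leq0n s) (ltn_ord s)).

Definition shiftP (i : 'I_n) (s : 'I_k) (X : {set vertex}) : {set vertex} :=
  if (i, s) \in X then (X :\ (i, s)) :|: [set (i, first_of s)] else X.

Definition shift_pi (i : 'I_n) (s : 'I_k) (F : {set {set vertex}}) :
  {set {set vertex}} :=
  [set shiftP i s X | X in F] :|: [set X in F | shiftP i s X \in F].

Definition stable (F : {set {set vertex}}) : Prop :=
  forall (i : 'I_n) (s : 'I_k), 0 < val s -> shift_pi i s F = F.

End Defs.

From mathcomp Require Import all_boot.
Set Implicit Arguments. Unset Strict Implicit. Unset Printing Implicit Defensive.

(* Maximality forces S and T to be closed under taking supersets of size at
   most r.  A member of phi^-1(S) is an r-set meeting each copy of K_k at most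
   once, and phi reads off the copies it meets in their first vertex; so two
   members of phi^-1(S) and phi^-1(T) share such a first vertex, and a member
   of S, enlarged to size r, gives a member of phi^-1(S) by placing it on first
   vertices.  A shift P_{i,s} moves a vertex of copy i to its first vertex, so
   it can only enlarge phi; by upward closure phi^-1(S) is closed under every
   P_{i,s}, hence fixed by every pi_{i,s}. *)

Lemma exists_superset_card (T : finType) (A : {set T}) (r : nat) :
  #|A| <= r <= #|T| -> exists2 B : {set T}, A \subset B & #|B| = r.
Proof.
case/andP=> leAr lerT.
pose P (B : {set T}) := (A \subset B) && (#|B| <= r).
have [B /maxsetP[/andP[subAB leBr] maxB]] : {B | maxset P B}.
  by apply: ex_maxset; exists A; rewrite /P subxx leAr.
exists B => //; apply/eqP; rewrite eqn_leq leBr leqNgt; apply/negP => ltBr.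
have /subsetPn[x _ Bx] : ~~ ([set: T] \subset B).
  apply: contraTN ltBr => /subset_leq_card.
  by rewrite cardsT -leqNgt => /(leq_trans lerT).
have PxB : P (x |: B).
  by rewrite /P (subset_trans subAB (subsetUr _ _)) cardsU1 Bx.
by move: Bx; rewrite -(maxB _ PxB (subsetUr _ _)) setU11.
Qed.

Lemma cross_intersectingC (T : finType) (A B : {set {set T}}) :
  cross_intersecting A B -> cross_intersecting B A.
Proof. by case=> A0 B0 AB; split=> // b a Bb Aa; rewrite setIC AB. Qed.

Section LowSets.
Variables n r : nat.
Implicit Types S T : {set {set 'I_n}}.

Definition upward_closed S :=
  forall A B : {set 'I_n}, A \in S -> A \subset B -> #|B| <= r -> B \in S.

Lemma r_maximalC S T : r_maximal r S T -> r_maximal r T S.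
Proof.
case=> lowS lowT ciST maxST; split=> //; first exact: cross_intersectingC.
move=> V W lowV lowW ciVW subTV subSW.
by have [] := maxST W V lowW lowV (cross_intersectingC ciVW) subSW subTV.
Qed.

(* Adding a superset B of some A in S to S keeps the pair cross-intersecting. *)
Lemma r_maximal_upward_closed S T : r_maximal r S T -> upward_closed S.
Proof.
case=> lowS lowT [_ T0 ciST] maxST A B SA subAB leBr.
have lowBS : B |: S \subset low_sets n r.
  by apply/subsetP => C /setU1P[-> | SC]; [rewrite inE | apply: (subsetP lowS)].
have ciBS : cross_intersecting (B |: S) T.
  split=> //; first by apply/set0Pn; exists B; rewrite setU11.
  move=> C D /setU1P[-> | SC] TD; last exact: ciST.
  by apply: contraNneq (ciST A D SA TD); rewrite -!subset0 => <-; apply: setSI.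
have [<- _] := maxST _ T lowBS lowT ciBS (subsetUr _ _) (subxx T).
exact: setU11.
Qed.

End LowSets.

Section Vertices.
Variables n k : nat.
Implicit Types (X Y : {set vertex n k}) (B : {set 'I_n}).

Lemma independentP X :
  reflect {in X &, forall u v, u.1 = v.1 -> u = v} (independent X).
Proof.
apply: (iffP forall_inP) => [indX u v Xu Xv eq1 | injX u Xu].
  have /forall_inP/(_ v Xv) := indX u Xu.
  rewrite /gamma_adj eq1 eqxx negbK => /eqP eq2.
  by case: u v eq1 eq2 {Xu Xv} => [? ?] [? ?] /= -> ->.
apply/forall_inP => v Xv; rewrite /gamma_adj.
by apply/andP => -[/eqP eq1]; rewrite (injX u v Xu Xv eq1) eqxx.
Qed.

Lemma mem_phi X (z : 'I_k) (i : 'I_n) : val z = 0 -> (i \in phi X) = ((i, z) \in X).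
Proof.
move=> z0; rewrite inE; apply/existsP/idP => [[j /andP[/eqP j0]] | Xiz].
  by have -> : j = z by apply: val_inj; rewrite j0 z0.
by exists z; rewrite z0 eqxx.
Qed.

Lemma phi_meet X Y : phi X :&: phi Y != set0 -> X :&: Y != set0.
Proof.
case/set0Pn=> i /setIP[+ Yi]; rewrite inE => /existsP[j /andP[/eqP j0 Xij]].
by apply/set0Pn; exists (i, j); rewrite inE Xij -(mem_phi _ _ j0).
Qed.

Lemma card_phi X : #|phi X| <= #|X|.
Proof.
have /subset_leq_card/leq_trans-> // : phi X \subset fst @: X.
  apply/subsetP => i; rewrite inE => /existsP[j /andP[_ Xij]].
  by apply/imsetP; exists (i, j).
exact: leq_imset_card.
Qed.

Definition embed (z : 'I_k) B : {set vertex n k} := [set (i, z) | i in B].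

Lemma embed_indep_sets (z : 'I_k) B : embed z B \in indep_sets n k #|B|.
Proof.
rewrite inE card_imset ?eqxx ?andbT => [|i j [] //].
by apply/independentP => _ _ /imsetP[i _ ->] /imsetP[j _ ->] /= ->.
Qed.

Lemma phi_embed (z : 'I_k) B : val z = 0 -> phi (embed z B) = B.
Proof.
move=> z0; apply/setP => i.
by rewrite (mem_phi _ _ z0) mem_imset // => ? ? [].
Qed.

End Vertices.

Section Families.
Variables n k r : nat.
Implicit Types (X : {set vertex n k}) (F : {set {set vertex n k}}).
Implicit Types S T : {set {set 'I_n}}.

Lemma shiftP_indep_sets X i s :
  0 < val s -> X \in indep_sets n k r -> shiftP i s X \in indep_sets n k r.
Proof.
rewrite /shiftP => s_gt0; case: ifP => // Xis.
rewrite !inE => /andP[/independentP indX /eqP cardX].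
set z := first_of s.
have only_is : {in X, forall u, u.1 = i -> u = (i, s)}.
  by move=> u Xu ui; apply: indX.
have Xiz : (i, z) \notin X.
  by apply/negP => /only_is/(_ erefl)[zs]; move: s_gt0; rewrite -zs.
rewrite setUC; apply/andP; split; last first.
  by rewrite cardsU1 !inE negb_and Xiz orbT -cardX (cardsD1 (i, s) X) Xis.
apply/independentP => u v; rewrite !inE.
case/orP=> [/eqP-> | /andP[u_is Xu]]; case/orP=> [/eqP-> | /andP[v_is Xv]] //=.
- by move=> /esym/(only_is _ Xv) vis; rewrite vis eqxx in v_is.
- by move=> /(only_is _ Xu) uis; rewrite uis eqxx in u_is.
- by apply: indX.
Qed.

Lemma phi_shiftP X i s : 0 < val s -> phi X \subset phi (shiftP i s X).
Proof.
rewrite /shiftP => s_gt0; case: ifP => // _.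
have z0 : val (first_of s) = 0 by [].
apply/subsetP => j; rewrite !(mem_phi _ _ z0) !inE => ->; rewrite andbT.
by apply/orP; left; apply/eqP => -[_ zs]; move: s_gt0; rewrite -zs.
Qed.

Lemma shift_pi_closed F i s :
  {in F, forall X, shiftP i s X \in F} -> shift_pi i s F = F.
Proof.
move=> closedF; apply/setP => X; rewrite /shift_pi in_setU inE.
apply/idP/idP => [/orP[/imsetP[Y FY ->] | /andP[]//] | FX]; first exact: closedF.
by rewrite FX closedF ?orbT.
Qed.

Lemma phi_inv_sub S : phi_inv k r S \subset indep_sets n k r.
Proof. by apply/subsetP => X; rewrite inE => /andP[]. Qed.

Lemma phi_inv_shiftP S X i s : upward_closed r S -> 0 < val s ->
  X \in phi_inv k r S -> shiftP i s X \in phi_inv k r S.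
Proof.
move=> upS s_gt0 /setIdP[indX SX].
have indY := shiftP_indep_sets i s_gt0 indX.
apply/setIdP; split=> //; apply: upS SX (phi_shiftP _ _ s_gt0) _.
by move: indY; rewrite inE => /andP[_ /eqP <-]; apply: card_phi.
Qed.

Lemma stable_phi_inv S : upward_closed r S -> stable (phi_inv k r S).
Proof. by move=> upS i s s_gt0; apply: shift_pi_closed => X; apply: phi_inv_shiftP. Qed.

Lemma phi_inv_neq0 S : 0 < k -> r <= n -> S \subset low_sets n r ->
  S != set0 -> upward_closed r S -> phi_inv k r S != set0.
Proof.
move=> k_gt0 le_rn lowS /set0Pn[A SA] upS.
have leAr : #|A| <= r by have := subsetP lowS A SA; rewrite inE.
have [B subAB cardB] : exists2 B : {set 'I_n}, A \subset B & #|B| = r.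
  by apply: exists_superset_card; rewrite card_ord leAr le_rn.
pose z : 'I_k := Ordinal k_gt0.
apply/set0Pn; exists (embed z B); rewrite inE phi_embed // -{1}cardB.
by rewrite embed_indep_sets (upS A) ?cardB.
Qed.

Lemma cross_intersecting_phi_inv S T :
  phi_inv k r S != set0 -> phi_inv k r T != set0 -> cross_intersecting S T ->
  cross_intersecting (phi_inv k r S) (phi_inv k r T).
Proof.
move=> S0 T0 [_ _ ciST]; split=> // X Y; rewrite !inE => /andP[_ SX] /andP[_ TY].
exact/phi_meet/ciST.
Qed.

End Families.

Theorem lemma4p5 (n k r : nat) (hk : 0 < k) (hrn : r <= n)
  (S T : {set {set 'I_n}}) :
  r_maximal r S T ->
  [/\ phi_inv k r S \subset indep_sets n k r,
      phi_inv k r T \subset indep_sets n k r,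
      cross_intersecting (phi_inv k r S) (phi_inv k r T),
      stable (phi_inv k r S) & stable (phi_inv k r T)].
Proof.
move=> maxST.
have upS := r_maximal_upward_closed maxST.
have upT := r_maximal_upward_closed (r_maximalC maxST).
case: maxST => lowS lowT ciST _; have [S0 T0 _] := ciST.
split; try exact: phi_inv_sub; try exact: stable_phi_inv.
by apply: cross_intersecting_phi_inv ciST; apply: phi_inv_neq0.
Qed.
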